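(* Under the GoRank setting described in the context, for every node $k\in[n]$ and every iteration $t\ge 1$, $$\mathbb{E}[R'_k(t)] = \frac{1}{t}\sum_{s=0}^{t-1} \mathbf{h}_k^\top \mathbf{W}_1^{\,s}\, \mathbf{e}_k, \qquad \mathbb{E}[R_k(t)] = n\,\mathbb{E}[R'_k(t)]+1,$$ where $\mathbf{h}_k=(\mathbb{I}_{\{X_k>X_1\}},\dots,\mathbb{I}_{\{X_k>X_n\}})^\top$, $\mathbf{W}_1=\mathbf{I}_n-\frac{1}{|E|}\mathbf{L}$, and $\mathbf{e}_k$ is the $k$-th canonical basis vector of $\mathbb{R}^n$.
   Context: Let $n\ge 2$ and let $\mathcal G=(V,E)$ be a connected, non-bipartite, undirected graph with vertex set $V=[n]=\{1,\dots,n\}$; $\mathbf{A}$ is its adjacency matrix, $\mathbf{D}$ the diagonal degree matrix and $\mathbf{L}=\mathbf{D}-\mathbf{A}$ its Laplacian. Node $k$ holds a real observation $X_k$, and the $X_k$ are pairwise distinct. Algorithm GoRank: initialize $Y_k(0)=X_k$ and $R'_k(0)=0$ for all $k$. At each iteration $s=1,2,\dots$: (i) every node $k$ sets $R'_k(s)=(1-1/s)R'_k(s-1)+(1/s)\,\mathbb{I}_{\{X_k>Y_k(s-1)\}}$ and $R_k(s)=nR'_k(s)+1$; (ii) an edge $(i,j)\in E$ is drawn uniformly at random from $E$, independently of everything before; (iii) the auxiliary values are swapped: $Y_i(s)=Y_j(s-1)$, $Y_j(s)=Y_i(s-1)$, and $Y_l(s)=Y_l(s-1)$ for $l\notin\{i,j\}$.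 Expectations are over the random edge sampling. *)

From HB Require Import structures.
From mathcomp Require Import all_boot all_order all_algebra.
From mathcomp Require Import fingroup perm.
Set Implicit Arguments. Unset Strict Implicit. Unset Printing Implicit Defensive.
Import Order.TTheory GRing.Theory Num.Theory.
Local Open Scope ring_scope.

Section GoRank.
Variables (R : realFieldType) (n : nat) (adj : rel 'I_n).

Definition simple_graph := symmetric adj /\ irreflexive adj.
Definition connected_graph := forall i j : 'I_n, connect adj i j.
Definition bipartite := exists c : 'I_n -> bool,
  forall i j, adj i j -> c i != c j.

(* Edge set: each undirected edge {i,j} represented once, as (i,j) with i < j. *)
Definition edges : {set 'I_n * 'I_n} :=
  [set p : 'I_n * 'I_n | (nat_of_ord p.1 < nat_of_ord p.2)%N && adj p.1 p.2].

Definition adjmx : 'M[R]_n := \matrix_(i, j) (adj i j)%:R.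
Definition degmx : 'M[R]_n := \matrix_(i, j) ((i == j)%:R * #|[set l | adj i l]|%:R).
Definition laplacian : 'M[R]_n := degmx - adjmx.
Definition W1 : 'M[R]_n := 1%:M - (#|edges|%:R)^-1 *: laplacian.

Definition swapY (Y : 'I_n -> R) (e : 'I_n * 'I_n) : 'I_n -> R :=
  fun l => Y (tperm e.1 e.2 l).
Definition Yaux (X : 'I_n -> R) (ws : seq ('I_n * 'I_n)) : 'I_n -> R :=
  foldl swapY X ws.

(* R'_k(s), where ws is the sequence of drawn edges (edge s+1 is ws`_s). *)
Fixpoint Rprime (X : 'I_n -> R) (ws : seq ('I_n * 'I_n)) (k : 'I_n) (s : nat) : R :=
  match s with
  | 0 => 0
  | s'.+1 => (1 - (s'.+1%:R)^-1) * Rprime X ws k s'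
             + (s'.+1%:R)^-1 * ((Yaux X (take s' ws) k < X k)%R)%:R
  end.
Definition Rrank X ws k s : R := n%:R * Rprime X ws k s + 1.

(* Expectation over t i.i.d. uniform edge draws from [edges]. *)
Definition expect (t : nat) (f : seq ('I_n * 'I_n) -> R) : R :=
  (#|edges|%:R ^+ t)^-1 *
  \sum_(w : t.-tuple ('I_n * 'I_n) | all (fun e => e \in edges) w) f w.

Definition hvec (X : 'I_n -> R) (k : 'I_n) : 'rV[R]_n := \row_j ((X j < X k)%R)%:R.
Definition evec (k : 'I_n) : 'cV[R]_n := delta_mx k 0.

End GoRank.

From HB Require Import structures.
From mathcomp Require Import all_boot all_order all_algebra.
From mathcomp Require Import fingroup perm.
Import Order.TTheory GRing.Theory Num.Theory.
Set Implicit Arguments. Unset Strict Implicit. Unset Printing Implicit Defensive.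
Local Open Scope ring_scope.

(* Each draw swaps the auxiliary values along a uniformly random edge. Averaged
   over that edge, a function of the value arriving at node i becomes the
   average of the old values weighted by column i of W1, so by induction the
   expectation of phi (Y_k(s)) is \sum_i (W1^s)_ik phi (X_i). As R'_k(t) is the
   running mean of the indicators [X_k > Y_k(s)] for s < t, linearity of the
   expectation gives the formula for R'_k, and the one for R_k is immediate. *)

Lemma big_tuple_cons (V : nmodType) (T : finType) m (P : pred T)
    (F : m.+1.-tuple T -> V) :
  \sum_(w : m.+1.-tuple T | all P w) F w =
  \sum_(e | P e) \sum_(w : m.-tuple T | all P w) F [tuple of e :: w].
Proof.
rewrite pair_big_dep /=.
rewrite (reindex (fun w : m.+1.-tuple T => (thead w, [tuple of behead w]))) /=.
  by apply: eq_big => [w | w _]; rewrite -?tuple_eta // {1}(tuple_eta w).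
exists (fun p : T * m.-tuple T => [tuple of p.1 :: p.2]) => [w _ | [e w] _] /=.
  by rewrite -tuple_eta.
by rewrite theadE; congr pair; apply: val_inj.
Qed.

Section Linearity.
Variables (R : realFieldType) (n : nat) (adj : rel 'I_n) (t : nat).

Lemma eq_expect (F G : seq ('I_n * 'I_n) -> R) :
  F =1 G -> expect adj t F = expect adj t G.
Proof. by move=> FG; rewrite /expect; congr (_ * _); apply: eq_bigr. Qed.

Lemma expectD (F G : seq ('I_n * 'I_n) -> R) :
  expect adj t (fun w => F w + G w) = expect adj t F + expect adj t G.
Proof. by rewrite /expect big_split mulrDr. Qed.

Lemma expectZ c (F : seq ('I_n * 'I_n) -> R) :
  expect adj t (fun w => c * F w) = c * expect adj t F.
Proof. by rewrite /expect -mulr_sumr mulrCA. Qed.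

Lemma expect_sum m (F : nat -> seq ('I_n * 'I_n) -> R) :
  expect adj t (fun w => \sum_(0 <= s < m) F s w) = \sum_(0 <= s < m) expect adj t (F s).
Proof. by rewrite /expect exchange_big mulr_sumr. Qed.

End Linearity.

Section RandomSwaps.
Variables (R : realFieldType) (n : nat) (adj : rel 'I_n).
Hypothesis adj_sym : symmetric adj.
Hypothesis edges_gt0 : (0 < #|edges adj|)%N.

Local Notation E := (#|edges adj|%:R : R).
Local Notation W := (W1 R adj).

Lemma edges_neq0 : E != 0.
Proof. by rewrite pnatr_eq0 -lt0n. Qed.

Lemma sum_edges_tperm_sub (f : 'I_n -> R) i :
  \sum_(e in edges adj) (f (tperm e.1 e.2 i) - f i) =
  \sum_j (adj i j)%:R * (f j - f i).
Proof.
rewrite big_mkcond /=.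
have -> : \sum_(p : 'I_n * 'I_n) (if p \in edges adj then f (tperm p.1 p.2 i) - f i else 0)
    = \sum_a \sum_b (if (a, b) \in edges adj then f (tperm a b i) - f i else 0).
  by rewrite pair_bigA; apply: eq_bigr => -[].
have split_edge a b : (if (a, b) \in edges adj then f (tperm a b i) - f i else 0) =
    (if ((a < b)%N && adj a b) && (a == i) then f b - f i else 0) +
    (if ((a < b)%N && adj a b) && (b == i) then f a - f i else 0).
  rewrite inE /=; case: ifP => _; last by rewrite addr0.
  have [<-|ai] := eqVneq a i; first by rewrite tpermL subrr if_same addr0.
  have [<-|bi] := eqVneq b i; first by rewrite tpermR add0r.
  by rewrite tpermD // subrr addr0.
rewrite (eq_bigr _ (fun a _ => eq_bigr _ (fun b _ => split_edge a b))).
under eq_bigr => a _ do rewrite big_split /=.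
rewrite big_split /= [X in _ + X]exchange_big /=.
rewrite (bigD1 i) //= [X in _ + X + _]big1 ?addr0; last first.
  by move=> a /negbTE ai; apply: big1 => b _; rewrite ai andbF.
rewrite [X in _ + X](bigD1 i) //= [X in _ + (_ + X)]big1 ?addr0; last first.
  by move=> b /negbTE bi; apply: big1 => a _; rewrite bi andbF.
rewrite -big_split /=; apply: eq_bigr => j _.
rewrite !eqxx !andbT (adj_sym j i).
case: (ltngtP i j) => [_|_|/val_inj <-]; last by rewrite !subrr mulr0 addr0.
  by rewrite addr0; case: (adj i j); rewrite ?mul1r ?mul0r.
by rewrite add0r; case: (adj i j); rewrite ?mul1r ?mul0r.
Qed.

Lemma sum_W1_col (f : 'I_n -> R) i :
  E * \sum_j W j i * f j = E * f i + \sum_j (adj i j)%:R * (f j - f i).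
Proof.
have deg_sum : #|[set l | adj i l]|%:R = \sum_j (adj i j)%:R :> R.
  rewrite -sum1_card natr_sum big_mkcond /=.
  by apply: eq_bigr => j _; rewrite inE; case: (adj i j).
have EW j : E * W j i = (j == i)%:R * (E - #|[set l | adj i l]|%:R) + (adj i j)%:R.
  rewrite /W1 /laplacian /degmx /adjmx !mxE adj_sym.
  rewrite mulrBr [E * (_ * _)]mulrA mulfV ?edges_neq0 // mul1r.
  case: eqVneq => [->|_] /=; first by rewrite !mul1r mulr1 opprB addrCA addrC.
  by rewrite !mul0r mulr0 !sub0r opprK add0r.
rewrite mulr_sumr; under eq_bigr => j _ do rewrite mulrA EW mulrDl.
rewrite big_split /= (bigD1 i) //= eqxx mul1r big1 ?addr0; last first.
  by move=> j /negbTE ->; rewrite !mul0r.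
rewrite deg_sum mulrBl addrAC -addrA; congr (_ + _).
by rewrite mulr_suml -sumrB; apply: eq_bigr => j _; rewrite mulrBr.
Qed.

Lemma sum_edges_tperm (f : 'I_n -> R) i :
  \sum_(e in edges adj) f (tperm e.1 e.2 i) = E * \sum_j W j i * f j.
Proof.
rewrite sum_W1_col -sum_edges_tperm_sub sumrB sumr_const.
by rewrite -[f i *+ _]mulr_natl addrC subrK.
Qed.

Definition sum_draws t (F : seq ('I_n * 'I_n) -> R) : R :=
  \sum_(w : t.-tuple ('I_n * 'I_n) | all (fun e => e \in edges adj) w) F w.

Lemma sum_draws_const t c : sum_draws t (fun=> c) = E ^+ t * c.
Proof.
rewrite /sum_draws; elim: t => [|t IH].
  by rewrite (big_pred1 [tuple]) ?expr0 ?mul1r // => w; rewrite tuple0.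
by rewrite big_tuple_cons (eq_bigr _ (fun e _ => IH)) sumr_const exprS -mulrA mulr_natl.
Qed.

Lemma sum_draws_Yaux (phi : R -> R) (g : 'I_n -> R) k s t : (s <= t)%N ->
  sum_draws t (fun w => phi (Yaux g (take s w) k)) =
  E ^+ t * \sum_i (W ^+ s) i k * phi (g i).
Proof.
have base t' g' : sum_draws t' (fun w => phi (Yaux g' (take 0 w) k)) =
    E ^+ t' * \sum_i (W ^+ 0) i k * phi (g' i).
  transitivity (sum_draws t' (fun=> phi (g' k))).
    by apply: eq_bigr => w _; rewrite take0.
  rewrite sum_draws_const (bigD1 k) //= mxE eqxx mul1r big1 ?addr0 // => i /negbTE ik.
  by rewrite mxE ik mul0r.
elim: t s g => [|t IH] [|s] g hs; rewrite ?base //.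
have step e : sum_draws t (fun w => phi (Yaux g (take s.+1 (e :: w)) k)) =
    E ^+ t * \sum_i (W ^+ s) i k * phi (g (tperm e.1 e.2 i)) := IH s (swapY g e) hs.
rewrite /sum_draws big_tuple_cons (eq_bigr _ (fun e _ => step e)) -mulr_sumr.
rewrite exchange_big /=.
under eq_bigr => i _ do rewrite -mulr_sumr (sum_edges_tperm (fun j => phi (g j))).
rewrite [W ^+ s.+1]exprS [E ^+ t.+1]exprS [E * _]mulrC -mulrA; congr (_ * _).
under eq_bigr => i _ do rewrite mulrCA.
rewrite -mulr_sumr; congr (_ * _).
under [RHS]eq_bigr => j _ do rewrite -mulmxE mxE mulr_suml.
rewrite [RHS]exchange_big /=; apply: eq_bigr => i _.
by rewrite mulr_sumr; apply: eq_bigr => j _; rewrite mulrCA mulrA.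
Qed.

Lemma expect_Yaux (phi : R -> R) (g : 'I_n -> R) k s t : (s <= t)%N ->
  expect adj t (fun w => phi (Yaux g (take s w) k)) = \sum_i (W ^+ s) i k * phi (g i).
Proof.
move=> hs; have := sum_draws_Yaux phi g k hs; rewrite /expect /sum_draws => ->.
by rewrite mulKf // expf_neq0 // edges_neq0.
Qed.

Lemma expect_cst t (c : R) : expect adj t (fun=> c) = c.
Proof.
have := sum_draws_const t c; rewrite /expect /sum_draws => ->.
by rewrite mulKf // expf_neq0 // edges_neq0.
Qed.

End RandomSwaps.

Lemma Rprime_mean (R : realFieldType) n (X : 'I_n -> R) ws k t :
  Rprime X ws k t = t%:R^-1 * \sum_(0 <= s < t) ((Yaux X (take s ws) k < X k)%R)%:R.
Proof.
have scaled m : m%:R * Rprime X ws k m = \sum_(0 <= s < m) ((Yaux X (take s ws) k < X k)%R)%:R.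
  elim: m => [|m IH]; first by rewrite mul0r big_geq.
  have m1 : m.+1%:R != 0 :> R by rewrite pnatr_eq0.
  rewrite /= big_nat_recr //= -IH mulrDr !mulrA mulrBr mulr1 mulfV // mul1r.
  by rewrite -natr1 addrK.
case: t => [|t]; first by rewrite big_geq // mulr0.
by rewrite -scaled mulKf // pnatr_eq0.
Qed.

Lemma edges_card_gt0 n (adj : rel 'I_n) :
  (1 < n)%N -> irreflexive adj -> connected_graph adj -> (0 < #|edges adj|)%N.
Proof.
move=> n_gt1 irr conn; set i0 := Ordinal (ltnW n_gt1).
have /connectP[[|y p] /= pth lst] := conn i0 (Ordinal n_gt1).
  by move/(congr1 val): lst.
case/andP: pth => adj0y _.
have y_neq0 : y != i0 by apply: contraTneq adj0y => ->; rewrite irr.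
by apply/card_gt0P; exists (i0, y); rewrite inE /= adj0y andbT lt0n; exact: y_neq0.
Qed.

Lemma row_mul_evec (R : realFieldType) n (u : 'rV[R]_n) (A : 'M[R]_n) k :
  (u *m A *m evec R k) 0 0 = \sum_i u 0 i * A i k.
Proof. by rewrite -colE !mxE. Qed.

Theorem mainTheorem1 (R : realFieldType) (n : nat) (adj : rel 'I_n)
  (X : 'I_n -> R) :
  (2 <= n)%N ->
  simple_graph adj -> connected_graph adj -> ~ bipartite adj ->
  injective X ->
  forall (k : 'I_n) (t : nat), (1 <= t)%N ->
    expect adj t (fun ws => Rprime X ws k t)
      = (t%:R)^-1 * \sum_(0 <= s < t)
          (hvec X k *m (W1 R adj) ^+ s *m evec R k) 0 0
    /\ expect adj t (fun ws => Rrank X ws k t)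
      = n%:R * expect adj t (fun ws => Rprime X ws k t) + 1.
Proof.
(* Non-bipartiteness and distinct observations only matter for convergence. *)
move=> n_gt1 [sym irr] conn _ _ k t _.
have E_gt0 := edges_card_gt0 n_gt1 irr conn.
split; last by rewrite /Rrank expectD expectZ (expect_cst E_gt0).
rewrite (eq_expect adj t (fun ws => Rprime_mean X ws k t)) expectZ expect_sum.
congr (_ * _); apply: eq_big_nat => s /andP[_ st].
rewrite (expect_Yaux sym E_gt0 (fun y => (y < X k)%R%:R) X k (ltnW st)) row_mul_evec.
by apply: eq_bigr => i _; rewrite mxE mulrC.
Qed.
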